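(* For the influence maximization problem in the independent cascade model with full-adoption feedback, the adaptivity gap is at least $\frac{e}{e-1}$, even when the influence graph is a directed line; that is, $$\sup_{G\text{ a directed line},\,k\ge 1}\frac{\mathrm{OPT}_A(G,k)}{\mathrm{OPT}_N(G,k)}\ge \frac{e}{e-1}.$$
   Context: Independent cascade (IC) model: an influence graph is a directed graph $G=(V,E,p)$ with a probability $p_{uv}\in[0,1]$ on each edge $(u,v)\in E$. A directed line is an influence graph whose underlying graph is a directed path $v_1\to v_2\to\cdots\to v_m$. A live-edge graph (realization) $\phi$ is a random subgraph in which each edge $(u,v)$ is present (''live'') independently with probability $p_{uv}$; $\mathcal{P}$ denotes this distribution. For $S\subseteq V$, $\Gamma(S,\phi)$ is the set of nodes reachable from $S$ in $\phi$, and $\sigma(S)=\mathbb{E}_{\Phi\sim\mathcal{P}}[|\Gamma(S,\Phi)|]$. Full-adoption feedback: when a node $u$ is selected as a seed, one observes the live/blocked status of all out-going edges of every node reachable from $u$ in the realization. An adaptive policy $\pi$ maps the observations so far (seeds selected and their feedback) to the next node to select; $V(\pi,\phi)$ is the seed set it selects under realization $\phi$, and $\sigma(\pi)=\mathbb{E}_{\Phi\sim\mathcal{P}}[|\Gamma(V(\pi,\Phi),\Phi)|]$. $\Pi(k)$ is the set of policies with $|V(\pi,\phi)|\le k$ for every realization $\phi$. $\mathrm{OPT}_N(G,k)=\max_{|S|\le k}\sigma(S)$ and $\mathrm{OPT}_A(G,k)=\sup_{\pi\in\Pi(k)}\sigma(\pi)$. *)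

From HB Require Import structures.
From mathcomp Require Import all_boot all_order all_algebra.
From mathcomp Require Import boolp classical_sets reals.
From mathcomp Require Import sequences.
Set Implicit Arguments. Unset Strict Implicit. Unset Printing Implicit Defensive.
Import Order.TTheory GRing.Theory Num.Theory.
Local Open Scope ring_scope.

(* Directed line v_0 -> v_1 -> ... -> v_{m-1}: nodes are 'I_m, edges are
   'I_m.-1, edge i goes from node i to node i+1 (node i's unique out-edge).
   Probabilities are given by p : 'I_m.-1 -> R. *)

Section Line.
Variable (R : realType) (m : nat) (p : 'I_m.-1 -> R).

Definition node := 'I_m.
Definition edge := 'I_m.-1.

Definition realization := {ffun edge -> bool}.

Definition prob (phi : realization) : R :=
  \prod_(e : edge) (if phi e then p e else 1 - p e).

Definition reachn (phi : realization) (u v : nat) : bool :=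
  (u <= v)%N && [forall e : edge, ((u <= e)%N && (e < v)%N) ==> phi e].

Definition Gamma (S : {set node}) (phi : realization) : {set node} :=
  [set v : node | [exists u in S, reachn phi u v]].

Definition sigma (S : {set node}) : R :=
  \sum_(phi : realization) prob phi * (#|Gamma S phi|)%:R.

Definition OPT_N (k : nat) : R :=
  \big[Num.max/0]_(S : {set node} | (#|S| <= k)%N) sigma S.

(* Full-adoption feedback of seeding u under phi: the status of every
   out-going edge of every node reachable from u (None = not observed). *)
Definition feedback (phi : realization) (u : node) : {ffun edge -> option bool} :=
  [ffun e : edge => if reachn phi u e then Some (phi e) else None].

Definition history := seq (node * {ffun edge -> option bool}).

Definition policy := history -> option node.

Fixpoint run (pi : policy) (phi : realization) (n : nat) (h : history) : history :=
  match n with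
  | 0 => h
  | n'.+1 => match pi h with
             | None => h
             | Some u => run pi phi n' (rcons h (u, feedback phi u))
             end
  end.

Definition seeds (pi : policy) (n : nat) (phi : realization) : {set node} :=
  [set u : node | u \in map fst (run pi phi n [::])].

Definition sigmaA (pi : policy) (n : nat) : R :=
  \sum_(phi : realization) prob phi * (#|Gamma (seeds pi n phi) phi|)%:R.

Definition OPT_A (k : nat) : R :=
  sup [set x : R | exists (n : nat) (pi : policy),
         (forall phi, (#|seeds pi n phi| <= k)%N) /\ x = sigmaA pi n].

End Line.

(* On a line with uniform edge probability q = n/(n+1), cut into m = k n nodes:

   Non-adaptively, charge every reached node to the last seed at or before it;
   that seed reaches the node j steps ahead with probability q^j, and since
   q^j <= q^n + [j < n] (q^j - q^n), k seeds reach at most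
   k (1 + q + ... + q^(n-1)) <= k (n+1) (1 - 1/e) nodes in expectation.

   Adaptively, seed node 0 and then, each time, the node right after the
   blocked edge revealed by the last feedback.  Every node preceded by fewer
   than k blocked edges is reached.  There are about k n/(n+1) < k blocked
   edges on average, and Markov's inequality for s^(#blocked edges), s = 1 + 1/(2n),
   shows that with k = 4 n^2 (n+1) each node is missed with probability at most
   1/(n+1); hence the policy reaches at least k n^2/(n+1) nodes.

   The ratio is thus at least (n/(n+1))^2 e/(e-1), which beats any c < e/(e-1)
   for n large. *)

From HB Require Import structures.
From mathcomp Require Import all_boot all_order all_algebra.
From mathcomp Require Import boolp classical_sets reals sequences exp.
From mathcomp Require Import zify ring lra.
Set Implicit Arguments. Unset Strict Implicit. Unset Printing Implicit Defensive.
Import Order.TTheory GRing.Theory Num.Theory.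
Local Open Scope ring_scope.

Lemma natr_forall (R : comPzRingType) (I : finType) (P : pred I) :
  ([forall i, P i]%:R : R) = \prod_i (P i)%:R.
Proof.
have [/forallP allP|/forallPn[i /negbTE Pi0]] := boolP [forall i, P i].
  by rewrite big1 // => i _; rewrite allP.
by rewrite (bigD1 i) //= Pi0 mul0r.
Qed.

Lemma card_seeds (m : nat) (pi : policy m) n phi : (#|seeds pi n phi| <= n)%N.
Proof.
have size_run h : (size (run pi phi n h) <= size h + n)%N.
  elim: n h => [|n IHn] h /=; first by rewrite addn0.
  case: (pi h) => [u|]; last exact: leq_addr.
  by apply: leq_trans (IHn _) _; rewrite size_rcons addSnnS.
rewrite /seeds cardsE; apply: leq_trans (card_size _) _.
by rewrite size_map; exact: (size_run [::]).
Qed.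

Section Realizations.
Variables (R : realType) (m : nat) (p : 'I_m.-1 -> R).

Lemma sum_prob_prod (g : 'I_m.-1 -> bool -> R) :
  \sum_(phi : realization m) prob p phi * \prod_e g e (phi e) =
  \prod_e (p e * g e true + (1 - p e) * g e false).
Proof.
transitivity (\prod_e \sum_(b : bool) (if b then p e else 1 - p e) * g e b).
  by rewrite bigA_distr_bigA; apply: eq_bigr => phi _; rewrite -big_split.
by apply: eq_bigr => e _; rewrite big_bool.
Qed.

Lemma sum_prob : \sum_(phi : realization m) prob p phi = 1.
Proof.
have := sum_prob_prod (fun _ _ => 1).
rewrite [RHS]big1 => [<-|e _]; last by rewrite !mulr1 addrC subrK.
by apply: eq_bigr => phi _; rewrite big1 ?mulr1.
Qed.

Lemma sum_prob_const (x : R) : \sum_(phi : realization m) prob p phi * x = x.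
Proof. by rewrite -mulr_suml sum_prob mul1r. Qed.

Hypothesis p01 : forall e, 0 <= p e <= 1.

Lemma prob_ge0 phi : 0 <= prob p phi.
Proof.
apply: prodr_ge0 => e _; have /andP[p0 p1] := p01 e.
by case: (phi e); rewrite ?subr_ge0.
Qed.

Lemma ler_sum_prob (f g : realization m -> R) : (forall phi, f phi <= g phi) ->
  \sum_phi prob p phi * f phi <= \sum_phi prob p phi * g phi.
Proof. by move=> fg; apply: ler_sum => phi _; rewrite ler_wpM2l ?prob_ge0. Qed.

Lemma sigmaA_le_OPT_A (pi : policy m) n k :
  (forall phi, (#|seeds pi n phi| <= k)%N) -> sigmaA p pi n <= OPT_A p k.
Proof.
move=> pik; apply: ub_le_sup; last by exists n, pi.
exists m%:R => _ [n' [pi' [_ ->]]].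
rewrite -[X in _ <= X]sum_prob_const; apply: ler_sum_prob => phi.
by rewrite ler_nat -[X in (_ <= X)%N]card_ord max_card.
Qed.

Lemma OPT_N_ge1 k : (0 < m)%N -> (0 < k)%N -> 1 <= OPT_N p k.
Proof.
move=> m0 k0; pose v0 : 'I_m := Ordinal m0.
apply: le_trans (le_bigmax_cond _ _ (_ : #|[set v0]| <= k)%N); last by rewrite cards1.
rewrite -[X in X <= _]sum_prob_const; apply: ler_sum_prob => phi.
rewrite ler1n card_gt0; apply/set0Pn; exists v0; rewrite inE.
apply/existsP; exists v0; rewrite set11 /reachn leqnn /=.
by apply/forallP.
Qed.

End Realizations.

Section RestartPolicy.
Variable m : nat.

Definition next_seed (phi : realization m) (u : nat) : nat :=
  if [pick e : 'I_m.-1 | reachn phi u e && ~~ phi e] is Some e then e.+1 else m.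

(* The last feedback reveals at most one blocked edge: the first one after the
   last seed. *)
Definition restart_policy : policy m := fun h =>
  match rev h with
  | [::] => insub 0%N
  | (_, fb) :: _ =>
      if [pick e : 'I_m.-1 | fb e == Some false] is Some e then insub e.+1 else None
  end.

Definition blocked_before (phi : realization m) (v : nat) : nat :=
  #|[set e : 'I_m.-1 | (e < v)%N && ~~ phi e]|.

Variable phi : realization m.

Definition restart_seed i := iter i (next_seed phi) 0%N.

Lemma restart_policy_nil (m0 : (0 < m)%N) : restart_policy [::] = Some (Ordinal m0).
Proof. exact: insubT. Qed.

Lemma restart_policy_rcons h u :
  restart_policy (rcons h (u, feedback phi u)) = insub (next_seed phi u).
Proof.
rewrite /restart_policy rev_rcons /next_seed.
rewrite (eq_pick (_ : _ =1 fun e : 'I_m.-1 => reachn phi u e && ~~ phi e)); last first.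
  by move=> e; rewrite ffunE; case: (reachn phi u e); case: (phi e).
by case: pickP => // _; rewrite insubN ?ltnn.
Qed.

Lemma next_seed_le u : (next_seed phi u <= m)%N.
Proof.
rewrite /next_seed; case: pickP => [e _|_] //.
exact: leq_trans (ltn_ord e) (leq_pred m).
Qed.

Lemma leq_next_seed u : (u <= m)%N -> (u <= next_seed phi u)%N.
Proof.
rewrite /next_seed; case: pickP => [e /andP[/andP[ue _] _] _|] //.
exact: leqW.
Qed.

Lemma iter_next_seed_ge i u : (u <= m)%N -> (u <= iter i (next_seed phi) u)%N.
Proof.
move=> um; elim: i => //= i IHi; apply: (leq_trans IHi); apply: leq_next_seed.
by case: i {IHi} => //= i; apply: next_seed_le.
Qed.

Lemma reachn_next_seed u v :
  (u <= v)%N -> (v < next_seed phi u)%N -> reachn phi u v.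
Proof.
rewrite /reachn /next_seed => -> /=.
case: pickP => [e0 /andP[/andP[_ /forallP live_e0] _]|no_blocked] lt_v.
  apply/forallP => e; apply/implyP => /andP[ue ev].
  by have := live_e0 e; rewrite ue (leq_trans ev).
apply/forallP => e; apply/implyP => /andP[ue _]; apply/negPn/negP => blocked_e.
have blocked_e' : (u <= e)%N && ~~ phi e by rewrite ue blocked_e.
case: (@arg_minnP _ e (fun e' : 'I_m.-1 => (u <= e')%N && ~~ phi e') val blocked_e')
  => e1 /andP[ue1 blocked_e1] min_e1.
have /negP := no_blocked e1; rewrite blocked_e1 andbT /reachn ue1; apply.
apply/forallP => e2; apply/implyP => /andP[ue2 e21]; apply/negPn/negP => blocked_e2.
by have := min_e1 e2; rewrite ue2 blocked_e2 leqNgt e21 => /(_ isT).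
Qed.

Lemma blocked_before_next_seed u v : (next_seed phi u <= v)%N -> (v < m)%N ->
  (blocked_before phi u < blocked_before phi v)%N.
Proof.
rewrite /next_seed; case: pickP => [e0 /andP[/andP[ue0 _] blocked_e0]|_] le_v vm; last by lia.
apply: proper_card; apply/properP; split.
  by apply/fintype.subsetP => e; rewrite !inE => /andP[eu ->]; rewrite andbT; lia.
by exists e0; rewrite inE blocked_e0 andbT // -leqNgt.
Qed.

Lemma blocked_before_restart_seed i v : (restart_seed i <= v)%N -> (v < m)%N ->
  (i <= blocked_before phi v)%N.
Proof.
elim: i v => // i IHi v; rewrite /restart_seed iterS => le_v vm.
have seed_m : (restart_seed i <= m)%N by case: i {IHi le_v} => //= i; apply: next_seed_le.
have := blocked_before_next_seed le_v vm.
have := IHi _ (leqnn _) (leq_ltn_trans (leq_next_seed seed_m) (leq_ltn_trans le_v vm)).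
by rewrite /restart_seed; lia.
Qed.

Lemma restart_seed_bracket j v : (v < restart_seed j)%N ->
  exists2 i, (i < j)%N & (restart_seed i <= v < restart_seed i.+1)%N.
Proof.
elim: j => // j IHj lt_v; case: (leqP (restart_seed j) v) => le_v.
  by exists j; rewrite ?le_v.
by have [i lt_ij] := IHj le_v; exists i => //; apply: ltnW.
Qed.

Lemma mem_run_seeds (pi : policy m) n h z :
  z \in map fst h -> z \in map fst (run pi phi n h).
Proof.
elim: n h => //= n IHn h hz; case: (pi h) => // u; apply: IHn.
by rewrite map_rcons mem_rcons inE hz orbT.
Qed.

Lemma mem_run_restart n h (x : 'I_m) i (y : 'I_m) : restart_policy h = Some x ->
  (i < n)%N -> iter i (next_seed phi) x = y ->
  y \in map fst (run restart_policy phi n h).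
Proof.
elim: n h x i => // n IHn h x i hx lt_in iter_y /=; rewrite hx.
case: i lt_in iter_y => [|i] lt_in iter_y.
  apply: mem_run_seeds; rewrite map_rcons mem_rcons inE.
  by apply/orP; left; apply/eqP/val_inj.
rewrite iterSr in iter_y.
have next_x : (next_seed phi x < m)%N.
  have := iter_next_seed_ge i (next_seed_le x); rewrite iter_y => le_y.
  exact: leq_ltn_trans le_y (ltn_ord y).
have := restart_policy_rcons h x; rewrite (insubT (fun k => k < m)%N next_x) => hx'.
by apply: (IHn _ _ i hx').
Qed.

Lemma mem_Gamma_restart k (v : 'I_m) : (blocked_before phi v < k)%N ->
  v \in Gamma (seeds restart_policy k phi) phi.
Proof.
move=> lt_vk.
have [|i lt_ik /andP[le_iv lt_vi]] := @restart_seed_bracket k v.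
  by rewrite ltnNge; apply/negP => /blocked_before_restart_seed /(_ (ltn_ord v)); lia.
have m0 : (0 < m)%N by apply: leq_ltn_trans (ltn_ord v).
have seed_i : (restart_seed i < m)%N by apply: leq_ltn_trans le_iv (ltn_ord v).
rewrite inE; apply/existsP; exists (Ordinal seed_i); apply/andP; split.
  by rewrite inE; apply: (mem_run_restart (restart_policy_nil m0) lt_ik).
exact: reachn_next_seed.
Qed.

End RestartPolicy.

Section AdaptiveBound.
Variables (R : realType) (m : nat) (p : 'I_m.-1 -> R).
Hypothesis p01 : forall e, 0 <= p e <= 1.

Lemma sum_prob_few_blocked_le_sigmaA k :
  \sum_(v : 'I_m) \sum_phi prob p phi * ((blocked_before phi v < k)%N)%:R <=
  sigmaA p (@restart_policy m) k.
Proof.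
rewrite /sigmaA exchange_big /=; apply: ler_sum => phi _.
rewrite -mulr_sumr ler_wpM2l ?prob_ge0 //.
rewrite -sum1_card natr_sum [X in _ <= X]big_mkcond /=; apply: ler_sum => v _.
case: ifP => [_|/negP v_out]; first by case: ltnP.
by case: ltnP => // /mem_Gamma_restart.
Qed.

Lemma prob_few_blocked_ge (s : R) k (v : 'I_m) : 1 <= s ->
  1 - (\sum_phi prob p phi * s ^+ blocked_before phi v) / s ^+ k <=
  \sum_phi prob p phi * ((blocked_before phi v < k)%N)%:R.
Proof.
move=> s1; have s0 : 0 < s by apply: lt_le_trans s1.
rewrite -[X in X - _ <= _](sum_prob p) mulr_suml -sumrB.
apply: ler_sum => phi _; rewrite -mulrA -{1}[prob p phi]mulr1 -mulrBr.
rewrite ler_wpM2l ?prob_ge0 //.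
case: ltnP => [_|le_k] /=.
  by rewrite lerBlDr lerDl divr_ge0 // exprn_ge0 // ltW.
by rewrite subr_le0 ler_pdivlMr ?exprn_gt0 // mul1r ler_weXn2l.
Qed.

Lemma sum_prob_expr_blocked (s : R) (v : 'I_m) : 1 <= s ->
  \sum_phi prob p phi * s ^+ blocked_before phi v <= \prod_e (p e + (1 - p e) * s).
Proof.
move=> s1.
pose g (e : 'I_m.-1) b := if (e < v)%N && ~~ b then s else 1.
have expr_blocked (phi : realization m) : s ^+ blocked_before phi v = \prod_e g e (phi e).
  by rewrite /blocked_before -prodr_const big_mkcond; apply: eq_bigr => e _; rewrite inE.
rewrite (eq_bigr (fun phi => prob p phi * \prod_e g e (phi e))) => [|phi _]; last first.
  by rewrite expr_blocked.
rewrite sum_prob_prod; apply: ler_prod => e _; rewrite /g andbF andbT mulr1.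
have /andP[pe0 pe1] := p01 e.
have ge1 : 1 <= p e + (1 - p e) * s by nra.
case: (e < v)%N => /=; last by rewrite mulr1 subrKC ler01 ge1.
by rewrite lexx andbT (le_trans ler01 ge1).
Qed.

Lemma sigmaA_restart_ge (s : R) k : 1 <= s ->
  m%:R * (1 - (\prod_e (p e + (1 - p e) * s)) / s ^+ k) <= sigmaA p (@restart_policy m) k.
Proof.
move=> s1; apply: le_trans (sum_prob_few_blocked_le_sigmaA k).
have -> : forall x : R, m%:R * x = \sum_(v : 'I_m) x.
  by move=> x; rewrite sumr_const card_ord mulr_natl.
apply: ler_sum => v _; apply: le_trans (prob_few_blocked_ge k v s1).
rewrite lerD2l lerN2 ler_wpM2r ?invr_ge0 ?exprn_ge0 //; first by lra.
exact: sum_prob_expr_blocked.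
Qed.

End AdaptiveBound.

Lemma prod_if_range (R : comPzRingType) (q : R) N u v : (u <= v <= N)%N ->
  \prod_(e < N) (if (u <= e < v)%N then q else 1) = q ^+ (v - u).
Proof.
move=> /andP[uv vN]; pose G e := if (u <= e < v)%N then q else 1.
rewrite -(big_mkord xpredT G) (big_cat_nat (leq0n u) (leq_trans uv vN)) /=.
rewrite (big_cat_nat uv vN) /= [X in X * _]big_nat_cond [X in _ * (_ * X)]big_nat_cond.
rewrite big1 => [|e /andP[/andP[_ eu] _]]; last by rewrite /G leqNgt eu.
rewrite [X in _ * (_ * X)]big1 => [|e /andP[/andP[ve _] _]].
  by rewrite mul1r mulr1 -prodr_const_nat; apply: eq_big_nat => e; rewrite /G => ->.
by rewrite /G ltnNge ve andbF.
Qed.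

Lemma sum_if_window_le (R : numDomainType) m u a (f : nat -> R) :
  (forall j, (j < a)%N -> 0 <= f j) ->
  \sum_(v < m) (if (u <= v < u + a)%N then f (v - u)%N else 0) <= \sum_(j < a) f j.
Proof.
move=> f0; pose G v := if (u <= v < u + a)%N then f (v - u)%N else 0.
have G0 v : 0 <= G v by rewrite /G; case: ifP => // /andP[? ?]; apply: f0; lia.
rewrite -(big_mkord xpredT G).
apply: le_trans (_ : \sum_(0 <= v < m + (u + a)) G v <= _).
  by rewrite (big_cat_nat (leq0n m) (leq_addr _ _)) /= lerDl sumr_ge0.
rewrite (big_cat_nat (leq0n u) (_ : u <= m + (u + a))%N); last by lia.
rewrite (big_cat_nat (leq_addr a u) (_ : u + a <= m + (u + a))%N); last by lia.
rewrite [X in X + _ <= _]big_nat_cond [X in _ + (_ + X) <= _]big_nat_cond.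
rewrite big1 => [|v /andP[/andP[_ vu] _]]; last by rewrite /G leqNgt vu.
rewrite [X in _ + (_ + X) <= _]big1 => [|v /andP[/andP[uv _] _]]; last first.
  by rewrite /G ltnNge uv andbF.
rewrite add0r addr0 -{1}(add0n u) big_addn addKn big_mkord; apply: ler_sum => j _.
by rewrite /G addnK; have := ltn_ord j; case: ifP => //; lia.
Qed.

Section NonAdaptiveBound.
Variables (R : realType) (m : nat).

Definition no_seed_between (S : {set 'I_m}) (u v : nat) : bool :=
  [forall w in S, ~~ (u < w <= v)%N].

Lemma mem_Gamma_le_last_seed (S : {set 'I_m}) (phi : realization m) (v : 'I_m) :
  ((v \in Gamma S phi)%:R : R) <=
  \sum_(u in S) ((no_seed_between S u v && reachn phi u v)%:R : R).
Proof.
case: (boolP (v \in Gamma S phi)) => [|_]; last by rewrite sumr_ge0.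
rewrite inE => /existsP[u0 /andP[u0S /andP[u0v /forallP live_u0]]].
have Su0 : (u0 \in S) && (u0 <= v)%N by rewrite u0S.
case: (@arg_maxnP _ u0 (fun w : 'I_m => (w \in S) && (w <= v)%N) val Su0)
  => u /andP[uS uv] max_u.
have last_u : no_seed_between S u v.
  apply/forallP => w; apply/implyP => wS; apply/negP => /andP[uw wv].
  by have := max_u w; rewrite wS wv => /(_ isT) /=; rewrite leqNgt uw.
have reach_u : reachn phi u v.
  rewrite /reachn uv; apply/forallP => e; apply/implyP => /andP[ue ev].
  by have := live_u0 e; rewrite ev (leq_trans (max_u u0 Su0) ue).
by rewrite (bigD1 u) //= last_u reach_u -[X in X <= _]addr0 lerD ?sumr_ge0.
Qed.

Lemma sum_last_seed_le1 (S : {set 'I_m}) (v : 'I_m) :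
  \sum_(u in S) ((no_seed_between S u v && (u <= v)%N)%:R : R) <= 1.
Proof.
case: (pickP (fun u : 'I_m => (u \in S) && no_seed_between S u v && (u <= v)%N))
  => [u0|none].
  move=> /andP[/andP[u0S last_u0] u0v].
  rewrite (bigD1 u0) //= last_u0 u0v big1 ?addr0 // => u /andP[uS u_neq].
  case: (boolP (no_seed_between S u v && (u <= v)%N)) => // /andP[last_u uv].
  case: (ltngtP u u0) => [lt_u|lt_u0|/val_inj eq_u]; last by rewrite eq_u eqxx in u_neq.
    by move/forallP: last_u => /(_ u0); rewrite u0S lt_u u0v.
  by move/forallP: last_u0 => /(_ u); rewrite uS lt_u0 uv.
rewrite big1 ?ler01 // => u uS.
by have := none u; rewrite uS /= => ->.
Qed.

Lemma sum_prob_reachn (q : R) (u v : nat) : (v <= m.-1)%N ->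
  \sum_(phi : realization m) prob (fun _ => q) phi * ((reachn phi u v)%:R : R) =
  ((u <= v)%N%:R : R) * q ^+ (v - u).
Proof.
move=> vm; pose g (e : 'I_m.-1) b := (((u <= e < v)%N ==> b) : nat)%:R : R.
have reachnE (phi : realization m) :
    ((reachn phi u v)%:R : R) = ((u <= v)%N%:R : R) * \prod_e g e (phi e).
  by rewrite /reachn -mulnb natrM natr_forall.
under eq_bigr do rewrite reachnE mulrCA.
rewrite -mulr_sumr sum_prob_prod.
case: (leqP u v) => uv; last by rewrite !mul0r.
rewrite -(@prod_if_range _ q m.-1 u v) ?uv //; congr (_ * _); apply: eq_bigr => e _.
by rewrite /g; case: ifP => _ /=; rewrite ?mulr1 ?mulr0 ?addr0 // addrC subrK.
Qed.

Lemma sigma_le_last_seed (q : R) (S : {set 'I_m}) : 0 <= q <= 1 ->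
  sigma (fun _ => q) S <=
  \sum_(v : 'I_m) \sum_(u in S) (no_seed_between S u v)%:R * ((u <= v)%N%:R * q ^+ (v - u)).
Proof.
move=> q01; have p01 (e : 'I_m.-1) : 0 <= (fun _ => q) e <= 1 by [].
apply: le_trans (_ : \sum_phi prob (fun _ => q) phi * \sum_(v : 'I_m) \sum_(u in S)
    ((no_seed_between S u v)%:R * (reachn phi u v)%:R) <= _).
  apply: ler_sum_prob => // phi.
  rewrite -sum1_card natr_sum big_mkcond /=; apply: ler_sum => v _.
  apply: le_trans (_ : ((v \in Gamma S phi)%:R : R) <= _); first by case: ifP.
  apply: le_trans (mem_Gamma_le_last_seed S phi v) _.
  by apply: ler_sum => u _; rewrite -natrM mulnb.
under eq_bigr do rewrite mulr_sumr.
rewrite exchange_big /=; apply: ler_sum => v _.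
under eq_bigr do rewrite mulr_sumr.
rewrite exchange_big /=; apply: ler_sum => u _.
under eq_bigr do rewrite mulrCA.
rewrite -mulr_sumr sum_prob_reachn //.
by rewrite -ltnS prednK ?ltn_ord //; apply: leq_ltn_trans (ltn_ord v).
Qed.

End NonAdaptiveBound.

Section UniformNonAdaptive.
Variables (R : realType) (m : nat) (q : R) (a : nat).
Hypothesis q01 : 0 <= q <= 1.

Let Q := q ^+ a.

(* Bounding q^j by q^a + [j < a] (q^j - q^a) makes the bound linear in the
   gaps between consecutive seeds, so no concavity argument is needed. *)
Lemma last_seed_term_le (S : {set 'I_m}) (u v : nat) :
  (no_seed_between S u v)%:R * ((u <= v)%N%:R * q ^+ (v - u)) <=
  Q * (no_seed_between S u v && (u <= v)%N)%:R +
  (if (u <= v < u + a)%N then q ^+ (v - u) - Q else 0).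
Proof.
have [q0 q1] := andP q01.
case: (no_seed_between S u v); case: (leqP u v) => uv /=;
  rewrite ?uv ?mul0r ?mulr0 ?add0r ?addr0 //.
- rewrite !mul1r mulr1; case: ltnP => [_|le_a]; first by rewrite addrC subrK.
  by rewrite addr0 ler_wiXn2l // leq_subRL.
- by case: ltnP => // lt_va; rewrite subr_ge0 ler_wiXn2l // ltnW // ltn_subLR.
Qed.

Lemma sigma_uniform_le (k : nat) (S : {set 'I_m}) : (#|S| <= k)%N -> (m <= a * k)%N ->
  sigma (fun _ => q) S <= k%:R * \sum_(j < a) q ^+ j.
Proof.
move=> Sk mak; have [q0 q1] := andP q01.
have Q0 : 0 <= Q by rewrite exprn_ge0.
have excess_ge0 j : (j < a)%N -> 0 <= q ^+ j - Q.
  by move=> ja; rewrite subr_ge0 ler_wiXn2l // ltnW.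
have sum_excess : \sum_(j < a) (q ^+ j - Q) = \sum_(j < a) q ^+ j - a%:R * Q.
  by rewrite sumrB sumr_const card_ord mulr_natl.
apply: le_trans (sigma_le_last_seed S q01) _.
apply: le_trans (_ : _ <= \sum_(v : 'I_m) \sum_(u in S)
    (Q * (no_seed_between S u v && (u <= v)%N)%:R +
     (if (u <= v < u + a)%N then q ^+ (v - u) - Q else 0))) _.
  by apply: ler_sum => v _; apply: ler_sum => u _; apply: last_seed_term_le.
under eq_bigr do rewrite big_split /=.
rewrite big_split /=.
have tail_le : \sum_(v : 'I_m) \sum_(u in S) Q * (no_seed_between S u v && (u <= v)%N)%:R
    <= m%:R * Q.
  rewrite -[m in m%:R]card_ord mulr_natl -sumr_const; apply: ler_sum => v _.
  by rewrite -mulr_sumr -[X in _ <= X]mulr1 ler_wpM2l ?sum_last_seed_le1.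
have window_le : \sum_(v : 'I_m) \sum_(u in S)
    (if (u <= v < u + a)%N then q ^+ (v - u) - Q else 0) <= #|S|%:R * \sum_(j < a) (q ^+ j - Q).
  rewrite exchange_big /= mulr_natl -sumr_const; apply: ler_sum => u _.
  exact: (@sum_if_window_le _ _ _ _ (fun j => q ^+ j - Q) excess_ge0).
have excess0 : 0 <= \sum_(j < a) (q ^+ j - Q) by apply: sumr_ge0 => j _; apply: excess_ge0.
have ma : (m%:R : R) <= a%:R * k%:R by rewrite -natrM ler_nat.
have Sk' : (#|S|%:R : R) <= k%:R by rewrite ler_nat.
apply: le_trans (lerD tail_le window_le) _; rewrite sum_excess in excess0 *; nra.
Qed.

End UniformNonAdaptive.

Section Numerics.
Variable R : realType.

Lemma sum_geometric_mul1B (q : R) n : (\sum_(j < n) q ^+ j) * (1 - q) = 1 - q ^+ n.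
Proof.
rewrite -[X in X - _ ^+ n](expr1n R n) subrXX [RHS]mulrC; congr (_ * _).
by apply: eq_bigr => j _; rewrite expr1n mul1r.
Qed.

Lemma bernoulli_lower (d : R) n : 0 <= d -> 1 + n%:R * d <= (1 + d) ^+ n.
Proof.
move=> d0; elim: n => [|n IHn]; first by rewrite mul0r addr0.
have nd0 : 0 <= n%:R * d by rewrite mulr_ge0.
rewrite exprS mulrS; nra.
Qed.

Lemma bernoulli_upper (x : R) n : 0 <= x -> (1 + x) ^+ n * (1 - n%:R * x) <= 1.
Proof.
move=> x0; elim: n => [|n IHn]; first by rewrite mul0r subr0 mulr1.
apply: le_trans IHn; rewrite exprS mulrS.
have y0 : 0 <= (1 + x) ^+ n by rewrite exprn_ge0 // addr_ge0.
have n0 : (0 : R) <= n%:R by exact: ler0n.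
have : 0 <= (1 + x) ^+ n * (x * x) * (1 + n%:R) by rewrite !mulr_ge0 // addr_ge0.
nra.
Qed.

Lemma expr1Dinvn_le_expR1 n : (0 < n)%N -> (1 + n%:R^-1) ^+ n <= expR (1 : R).
Proof.
move=> n0; rewrite -[X in expR X](@mulVf _ n%:R) ?pnatr_eq0 -?lt0n // expRM_natr.
apply: lerXn2r; rewrite ?nnegrE ?expR_ge1Dx //.
  by rewrite addr_ge0 // invr_ge0.
exact/ltW/expR_gt0.
Qed.

Lemma sum_expr_ratio_le n : (0 < n)%N ->
  \sum_(j < n) (n%:R / n.+1%:R : R) ^+ j <= n.+1%:R * (1 - (expR 1)^-1).
Proof.
move=> n0; set q : R := n%:R / n.+1%:R.
have N0 : (0 : R) < n%:R by rewrite ltr0n.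
have N1 : (n.+1%:R : R) = n%:R + 1 by rewrite mulrS addrC.
have q0 : 0 <= q by rewrite divr_ge0.
have sum_q : \sum_(j < n) q ^+ j = n.+1%:R * (1 - q ^+ n).
  rewrite -sum_geometric_mul1B (_ : 1 - q = n.+1%:R^-1); last by rewrite /q N1; field; lra.
  by rewrite mulrCA mulfV ?pnatr_eq0 ?mulr1.
rewrite sum_q ler_wpM2l // lerD2l lerN2.
have qn_inv : q ^+ n * (1 + n%:R^-1) ^+ n = 1.
  by rewrite -exprMn (_ : q * _ = 1) ?expr1n // /q N1; field; lra.
have e_pos : 0 < (1 + n%:R^-1 : R) ^+ n by rewrite exprn_gt0 // ltr_wpDr // invr_ge0.
rewrite (canRL (mulfK (lt0r_neq0 e_pos)) qn_inv) div1r.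
by rewrite lef_pV2 ?posrE ?expR_gt0 //; exact: expr1Dinvn_le_expR1.
Qed.

(* Chosen so that k d = n for d = 1/(4n(n+1)) in [blocked_tail_le]. *)
Definition seed_budget n := (4 * n ^ 2 * n.+1)%N.

Lemma blocked_tail_le n (q s : R) : (0 < n)%N ->
  q = n%:R / n.+1%:R -> s = 1 + (2 * n%:R)^-1 ->
  (q + (1 - q) * s) ^+ (seed_budget n * n).-1 / s ^+ seed_budget n <= n.+1%:R^-1.
Proof.
move=> n0 -> ->; set k := seed_budget n; set N : R := n%:R.
have N0 : 0 < N by rewrite ltr0n.
have N1 : (n.+1%:R : R) = N + 1 by rewrite mulrS addrC.
have kN : (k%:R : R) = 4 * N ^+ 2 * (N + 1) by rewrite /k /seed_budget !natrM N1 -/N expr2.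
set x : R := (2 * N * (N + 1))^-1.
have x0 : 0 <= x by rewrite invr_ge0; nra.
have -> : N / n.+1%:R + (1 - N / n.+1%:R) * (1 + (2 * N)^-1) = 1 + x.
  by rewrite N1 /x; field; apply/andP; split; lra.
(* Split s = g (1 + d): g^k absorbs (1 + x)^(kn), and (1 + d)^k >= 1 + k d = n + 1. *)
set g : R := (2 * N + 2) / (2 * N + 1).
have g0 : 0 < g by rewrite divr_gt0; lra.
set d : R := (4 * N * (N + 1))^-1.
have d0 : 0 <= d by rewrite invr_ge0; nra.
have -> : 1 + (2 * N)^-1 = g * (1 + d) by rewrite /g /d; field; nra.
have pow_x_n : (1 + x) ^+ n <= g.
  have := bernoulli_upper n x0; rewrite -/N (_ : 1 - N * x = g^-1).
    by rewrite ler_pdivrMr // mul1r.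
  by rewrite /x /g; field; nra.
have pow_x_kn : (1 + x) ^+ (k * n).-1 <= g ^+ k.
  apply: le_trans (_ : (1 + x) ^+ (k * n) <= _); first by rewrite ler_weXn2l ?leq_pred //; lra.
  by rewrite mulnC exprM lerXn2r // !nnegrE ?(ltW g0) ?exprn_ge0 //; lra.
have pow_d_k : 1 + N <= (1 + d) ^+ k.
  by rewrite (_ : N = k%:R * d) ?bernoulli_lower // kN /d; field; nra.
rewrite exprMn ler_pdivrMr ?mulr_gt0 ?exprn_gt0 //; last by lra.
apply: le_trans pow_x_kn _; rewrite N1 mulrCA ler_peMr ?exprn_ge0 ?(ltW g0) //.
by rewrite ler_pdivlMl ?mulr1 //; lra.
Qed.

Lemma gap_size_exists (c : R) : c < expR 1 / (expR 1 - 1) ->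
  exists2 n, (0 < n)%N & forall K X : R, 0 < K ->
    0 <= X <= K * (n.+1%:R * (1 - (expR 1)^-1)) -> c * X < K * (n%:R ^+ 2 / n.+1%:R).
Proof.
move=> hc; set e : R := expR 1.
have e2 : 1 + 1 <= e by exact: expR_ge1Dx.
set rho := c * (e - 1) / e.
have rho1 : rho < 1 by rewrite ltr_pdivrMr ?mul1r -?ltr_pdivlMr //; lra.
have b0 : 0 <= 3 / (1 - rho) by rewrite divr_ge0 //; lra.
exists (Num.bound (3 / (1 - rho))).+1 => // K X K0 /andP[X0 XB].
set n := (Num.bound _).+1; set N : R := n%:R.
have N_ge1 : 1 <= N by rewrite ler1n.
have Nrho : 3 < N * (1 - rho).
  rewrite -ltr_pdivrMr ?subr_gt0 //; apply: lt_le_trans (archi_boundP b0) _.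
  by rewrite ler_nat.
have Kpos : 0 < K * (N ^+ 2 / n.+1%:R) by rewrite !mulr_gt0 ?invr_gt0 ?ltr0n // ltr0n.
have [c0|c0] := lerP c 0; first by apply: le_lt_trans Kpos; rewrite mulr_le0_ge0.
apply: le_lt_trans (ler_wpM2l (ltW c0) XB) _.
have -> : c * (K * (n.+1%:R * (1 - e^-1))) = K * (n.+1%:R * rho).
  by rewrite /rho; field; lra.
have N1 : (n.+1%:R : R) = N + 1 by rewrite mulrS addrC.
rewrite ltr_pM2l // N1 ltr_pdivlMr; last by lra.
have : 0 < (1 - rho) * (2 * N + 1) by rewrite mulr_gt0 //; lra.
have : 0 < (N * (1 - rho) - 3) * N by rewrite mulr_gt0 //; lra.
nra.
Qed.

End Numerics.

Section UniformLine.
Variables (R : realType) (n : nat).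
Hypothesis n0 : (0 < n)%N.

Let q : R := n%:R / n.+1%:R.

Lemma ratio_succ01 : 0 <= q <= 1.
Proof. by rewrite /q divr_ge0 //= ler_pdivrMr ?ltr0n // mul1r ler_nat leqnSn. Qed.

Lemma OPT_N_uniform_le (m k : nat) : (m <= n * k)%N ->
  OPT_N (fun _ : 'I_m.-1 => q) k <= k%:R * (n.+1%:R * (1 - (expR 1)^-1)).
Proof.
move=> mnk; apply: bigmax_le => [|S Sk].
  rewrite !mulr_ge0 // subr_ge0 invf_le1 ?expR_gt0 //.
  by apply: le_trans (expR_ge1Dx 1); rewrite lerDr.
apply: le_trans (sigma_uniform_le ratio_succ01 Sk mnk) _.
by rewrite ler_wpM2l // sum_expr_ratio_le.
Qed.

Lemma OPT_A_uniform_ge :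
  (seed_budget n)%:R * (n%:R ^+ 2 / n.+1%:R) <=
  OPT_A (fun _ : 'I_(seed_budget n * n).-1 => q) (seed_budget n).
Proof.
set k := seed_budget n; set m := (k * n)%N; set s : R := 1 + (2 * n%:R)^-1.
have n1_pos : (0 : R) < n.+1%:R by rewrite ltr0n.
have -> : k%:R * (n%:R ^+ 2 / n.+1%:R) = m%:R * (1 - n.+1%:R^-1) :> R.
  by rewrite /m natrM; field; lra.
have s1 : 1 <= s by rewrite lerDl invr_ge0 mulr_ge0.
have p01 (e : 'I_m.-1) : 0 <= (fun _ => q) e <= 1 by exact: ratio_succ01.
apply: le_trans (sigmaA_le_OPT_A p01 (card_seeds _ _)).
apply: le_trans (sigmaA_restart_ge p01 k s1).
rewrite prodr_const card_ord ler_wpM2l // lerD2l lerN2.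
exact: blocked_tail_le.
Qed.

End UniformLine.

Unset Implicit Arguments.

Theorem theorem4 (R : realType) (c : R) :
  c < expR 1 / (expR 1 - 1) ->
  exists (m : nat) (p : 'I_m.-1 -> R) (k : nat),
    (forall e, 0 <= p e <= 1) /\ (1 <= k)%N /\ 0 < OPT_N p k /\
    c * OPT_N p k < OPT_A p k.
Proof.
move=> hc; have [n n0 gap] := gap_size_exists hc.
have k0 : (0 < seed_budget n)%N by rewrite /seed_budget !muln_gt0 n0.
pose p (e : 'I_(seed_budget n * n).-1) : R := n%:R / n.+1%:R.
have p01 e : 0 <= p e <= 1 by exact: ratio_succ01.
have OPT_N_pos : 0 < OPT_N p (seed_budget n).
  by apply: lt_le_trans ltr01 (OPT_N_ge1 p01 _ k0); rewrite muln_gt0 k0.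
exists (seed_budget n * n)%N, p, (seed_budget n); do 3!split => //.
apply: lt_le_trans (OPT_A_uniform_ge R n0).
apply: gap; first by rewrite ltr0n.
by rewrite (ltW OPT_N_pos) OPT_N_uniform_le // mulnC.
Qed.
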